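(* Let $\Gamma$ be a distance-regular graph with intersection array $\{b_0,b_1,\dots,b_{D-1};c_1,\dots,c_D\}$ and let $(u_{ij})$ be the generators of $C(G_{aut}^+(\Gamma))$. Let $2\le m\le D$ with $c_m\ge 2$, and assume $u_{ij}u_{kl}=u_{kl}u_{ij}$ for all vertices $i,j,k,l$ with $d(i,k)=d(j,l)=m-1$. If one of the following holds: (a) $c_2=1$ and $b_1+1=b_0$; (b) $c_2=1$ and $b_1+2=b_0$; (c) $c_2=2$, $m=2$ and $b_1+3=b_0$; then $u_{ij}u_{kl}=u_{kl}u_{ij}$ for all $i,j,k,l$ with $d(i,k)=d(j,l)=m$.
   Context: A connected regular graph $\Gamma=(V,E)$ of diameter $D$ is distance-regular with intersection array $\{b_0,\dots,b_{D-1};c_1,\dots,c_D\}$ if for any vertices $v,w$ with $d(v,w)=i$, exactly $b_i$ neighbors of $w$ are at distance $i+1$ from $v$ and exactly $c_i$ neighbors of $w$ are at distance $i-1$ from $v$ ($d$ the graph distance). $C(G_{aut}^+(\Gamma))$ is the universal unital $C^*$-algebra generated by $u_{ij}$, $i,j\in V=\{1,\dots,n\}$, with relations: (R1) $u_{ij}=u_{ij}^*=u_{ij}^2$; (R2) $\sum_{l} u_{il}=1=\sum_{l} u_{li}$ for all $i$; (R3) $u_{ij}u_{kl}=u_{kl}u_{ij}=0$ whenever exactly one of $(i,k)\in E$, $(j,l)\in E$ holds. *)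

From HB Require Import structures.
From mathcomp Require Import all_boot all_order all_algebra.
Set Implicit Arguments. Unset Strict Implicit. Unset Printing Implicit Defensive.
Import Order.TTheory GRing.Theory Num.Theory.

Definition ball (n : nat) (e : rel 'I_n) (k : nat) (x : 'I_n) : {set 'I_n} :=
  iter k (fun S => S :|: [set y | [exists z in S, e z y]]) [set x].

(* Graph distance d(x,y): least k with y in ball k x (searched in 0..n-1; for a
   connected graph on n vertices the distance is always < n). *)
Definition gdist (n : nat) (e : rel 'I_n) (x y : 'I_n) : nat :=
  find (fun k => y \in ball e k x) (iota 0 n).

Definition simple_graph (n : nat) (e : rel 'I_n) : Prop :=
  symmetric e /\ irreflexive e.

Definition connected_graph (n : nat) (e : rel 'I_n) : Prop :=
  forall x y : 'I_n, connect e x y.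

Definition has_diameter (n : nat) (e : rel 'I_n) (D : nat) : Prop :=
  (forall x y : 'I_n, gdist e x y <= D) /\
  (exists x y : 'I_n, gdist e x y = D).

(* Distance-regular with intersection array {b_0..b_{D-1}; c_1..c_D}:
   connected, of diameter D, and for all v,w with d(v,w)=i, exactly b_i
   neighbours of w are at distance i+1 from v (i < D) and exactly c_i
   neighbours of w are at distance i-1 from v (1 <= i <= D).
   (Regularity of degree b_0 is the case i = 0.) *)
Definition distance_regular (n : nat) (e : rel 'I_n) (D : nat)
    (b c : nat -> nat) : Prop :=
  [/\ simple_graph e, connected_graph e, has_diameter e D &
      forall v w : 'I_n,
        (gdist e v w < D ->
           #|[set z | e w z & gdist e v z == (gdist e v w).+1]| = b (gdist e v w)) /\
        (1 <= gdist e v w ->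
           #|[set z | e w z & gdist e v z == (gdist e v w).-1]| = c (gdist e v w))].

Local Open Scope ring_scope.
(* A unital C*-algebra over the scalar field C (C = the complex numbers; we
   allow any numClosedFieldType, of which the complex numbers are the intended
   instance): an algebra A with a conjugate-linear anti-multiplicative
   involution, and a complete submultiplicative norm satisfying the
   C*-identity. *)
Record cstar_algebra (C : numClosedFieldType) (A : algType C)
    (star : A -> A) (nrm : A -> C) : Prop := {
  star_add : forall x y, star (x + y) = star x + star y;
  star_scale : forall (a : C) x, star (a *: x) = Num.conj a *: star x;
  star_mul : forall x y, star (x * y) = star y * star x;
  star_invol : forall x, star (star x) = x;
  nrm_ge0 : forall x, 0 <= nrm x;
  nrm_eq0 : forall x, nrm x = 0 -> x = 0;
  nrm_add : forall x y, nrm (x + y) <= nrm x + nrm y;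
  nrm_scale : forall (a : C) x, nrm (a *: x) = `|a| * nrm x;
  nrm_mul : forall x y, nrm (x * y) <= nrm x * nrm y;
  nrm_cstar : forall x, nrm (star x * x) = nrm x ^+ 2;
  nrm_complete : forall s : nat -> A,
    (forall eps : C, 0 < eps -> exists N, forall p q, (N <= p)%N -> (N <= q)%N ->
        nrm (s p - s q) < eps) ->
    exists x, forall eps : C, 0 < eps -> exists N, forall p, (N <= p)%N ->
        nrm (s p - x) < eps
}.

(* Relations (R1)-(R3) of C(G_aut^+(Gamma)) for a family u of elements of A. *)
Definition qaut_relations (n : nat) (e : rel 'I_n) (C : numClosedFieldType)
    (A : algType C) (star : A -> A) (u : 'I_n -> 'I_n -> A) : Prop :=
  [/\ (forall i j, u i j = star (u i j) /\ u i j = u i j * u i j),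
      (forall i, \sum_(l < n) u i l = 1 /\ \sum_(l < n) u l i = 1) &
      (forall i j k l, (e i k) != (e j l) ->
          u i j * u k l = 0 /\ u k l * u i j = 0)].

From HB Require Import structures.
From mathcomp Require Import all_boot all_order all_algebra zify.
Import Order.TTheory GRing.Theory Num.Theory.
Set Implicit Arguments. Unset Strict Implicit. Unset Printing Implicit Defensive.

(* Since c_m >= 2, k has two neighbours
   p != p' at distance m - 1 from i.  With L x = \sum_(q ~ l) u x q we show
       u i j * u k l = u i j * L p * L p'.                                   (1)
   As u i j commutes with L p and L p' (hypothesis at distance m - 1), taking
   adjoints of (1) with p and p' exchanged yields u k l * u i j = u i j * u k l. *)

Section Distance.
Variables (n : nat) (e : rel 'I_n).

Lemma ballS k x :
  ball e k.+1 x = ball e k x :|: [set y | [exists z in ball e k x, e z y]].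
Proof. by []. Qed.

Lemma ball_mono x j k : j <= k -> ball e j x \subset ball e k x.
Proof.
move=> /subnK <-; elim: (k - j) => [|i IH]; first by rewrite add0n.
by rewrite addSn (subset_trans IH) // ballS subsetUl.
Qed.

Lemma ball_edge k x y z : y \in ball e k x -> e y z -> z \in ball e k.+1 x.
Proof.
by move=> hy hyz; rewrite ballS !inE; apply/orP; right; apply/existsP; exists y; rewrite hy.
Qed.

Lemma ballSP k x y : y \in ball e k.+1 x ->
  y \in ball e k x \/ exists2 z, z \in ball e k x & e z y.
Proof.
rewrite ballS !inE => /orP[->|/existsP[z /andP[hz hzy]]]; first by left.
by right; exists z.
Qed.

Lemma path_in_ball x p : path e x p -> last x p \in ball e (size p) x.
Proof.
suff walk k z : z \in ball e k x -> path e z p -> last z p \in ball e (k + size p) x.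
  by move=> hp; have := walk 0 x; rewrite add0n; apply; rewrite ?set11.
elim: p k z => [|y p IH] k z hz /=; first by rewrite addn0.
by case/andP=> hzy hp; rewrite addnS -addSn; apply: IH => //; apply: ball_edge hzy.
Qed.

Hypothesis e_conn : connected_graph e.

(* In a connected graph on n vertices any vertex is reached within n - 1 steps,
   along a shortest (hence duplicate-free) walk. *)
Lemma in_ball_max x y : y \in ball e n.-1 x.
Proof.
have [p px_p ->] := connectP (e_conn x y).
case/shortenP: px_p => p' px_p' uniq_p' _.
have size_le : size p' <= n.-1.
  have := max_card (mem (x :: p')); rewrite card_ord (card_uniqP uniq_p') /=; lia.
exact: (subsetP (ball_mono x size_le)) (path_in_ball px_p').
Qed.

Lemma gdist_has x y : has (fun k => y \in ball e k x) (iota 0 n).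
Proof.
apply/hasP; exists n.-1; last exact: in_ball_max.
by rewrite mem_iota add0n leq0n /= prednK //; case: x => x' hx; apply: leq_ltn_trans hx.
Qed.

Lemma gdist_lt x y : gdist e x y < n.
Proof. by have := gdist_has x y; rewrite has_find size_iota. Qed.

Lemma gdist_ball x y : y \in ball e (gdist e x y) x.
Proof. by have := nth_find 0 (gdist_has x y); rewrite nth_iota ?add0n ?gdist_lt. Qed.

Lemma gdistP x y k : (gdist e x y <= k) = (y \in ball e k x).
Proof.
apply/idP/idP => [h|hk]; first exact: (subsetP (ball_mono x h)) (gdist_ball x y).
rewrite leqNgt; apply/negP => hlt.
have hkn : k < n := ltn_trans hlt (gdist_lt x y).
by have := before_find 0 hlt; rewrite nth_iota // add0n hk.
Qed.

Lemma gdist_refl x : gdist e x x = 0.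
Proof. by apply/eqP; rewrite -leqn0 gdistP set11. Qed.

Lemma gdist_eq0 x y : gdist e x y = 0 -> y = x.
Proof. by move=> h; have := gdist_ball x y; rewrite h inE => /eqP. Qed.

Lemma gdist_edge x y z : e y z -> gdist e x z <= (gdist e x y).+1.
Proof. by move=> hyz; rewrite gdistP; apply: ball_edge hyz; apply: gdist_ball. Qed.

Lemma gdist_pred x y s : gdist e x y = s.+1 -> exists2 z, e z y & gdist e x z = s.
Proof.
move=> h; have := gdist_ball x y; rewrite h => /ballSP [|[z hz hzy]].
  by rewrite -gdistP h ltnn.
exists z => //; apply/eqP; rewrite eqn_leq gdistP hz /=.
by have := gdist_edge x hzy; rewrite h ltnS.
Qed.

Hypothesis e_irr : irreflexive e.

Lemma gdist1E x y : (gdist e x y == 1) = e x y.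
Proof.
apply/idP/idP => [/eqP h|hxy].
  have := gdist_ball x y; rewrite h => /ballSP[].
    by rewrite inE => /eqP hyx; move: h; rewrite hyx gdist_refl.
  by move=> [z]; rewrite inE => /eqP ->.
rewrite eqn_leq; have := gdist_edge x hxy; rewrite gdist_refl => -> /=.
by rewrite lt0n; apply: contraL hxy => /eqP /gdist_eq0 ->; rewrite e_irr.
Qed.

Hypothesis e_sym : symmetric e.

Lemma gdist2_common x y z : x != y -> ~~ e x y -> e x z -> e y z -> gdist e x y = 2.
Proof.
move=> hxy hnxy hxz hyz; rewrite -gdist1E in hnxy.
have : gdist e x y != 0 by apply: contra_neq hxy => /gdist_eq0 ->.
have := gdist_edge x (_ : e z y); rewrite e_sym => /(_ hyz).
move: hxz hnxy; rewrite -gdist1E => /eqP ->.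
by case: (gdist e x y) => [|[|[|?]]].
Qed.

End Distance.

Section DistanceRegular.
Variables (n : nat) (e : rel 'I_n) (D : nat) (b c : nat -> nat).
Hypothesis e_dr : distance_regular e D b c.

Let e_sym : symmetric e. Proof. by case: e_dr => -[]. Qed.
Let e_irr : irreflexive e. Proof. by case: e_dr => -[]. Qed.
Let e_conn : connected_graph e. Proof. by case: e_dr. Qed.
Let gdist_le_D v w : gdist e v w <= D. Proof. by case: e_dr => _ _ []. Qed.

Let dr_b v w : gdist e v w < D ->
  #|[set z | e w z & gdist e v z == (gdist e v w).+1]| = b (gdist e v w).
Proof. by case: e_dr => _ _ _ /(_ v w) []. Qed.

Let dr_c v w : 0 < gdist e v w ->
  #|[set z | e w z & gdist e v z == (gdist e v w).-1]| = c (gdist e v w).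
Proof. by case: e_dr => _ _ _ /(_ v w) []. Qed.

Lemma dr_valency a : 0 < D -> #|[set x | e a x]| = b 0.
Proof.
move=> D_gt0; have := dr_b (v:=a) (w:=a); rewrite gdist_refl // => /(_ D_gt0) <-.
by apply: eq_card => z; rewrite !inE gdist1E // andbb.
Qed.

(* The c_s neighbours of w closer to v are among its b_0 neighbours. *)
Lemma dr_c_le_valency v w : 0 < gdist e v w -> c (gdist e v w) <= b 0.
Proof.
move=> hvw; rewrite -(dr_c hvw) -(dr_valency w (leq_trans hvw (gdist_le_D v w))).
by apply: subset_leq_card; apply/subsetP => z; rewrite !inE => /andP[].
Qed.

Lemma dr_common2 x y : gdist e x y = 2 -> #|[set z | e x z & e y z]| = c 2.
Proof.
move=> d_xy; have := dr_c (v:=x) (w:=y); rewrite d_xy => /(_ isT) <-.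
by apply: eq_card => z; rewrite !inE gdist1E // andbC.
Qed.

Lemma dr_two_closer v w : 0 < gdist e v w -> 1 < c (gdist e v w) ->
  exists p p', [/\ e w p, e w p', p != p', gdist e v p = (gdist e v w).-1
                  & gdist e v p' = (gdist e v w).-1].
Proof.
move=> hvw; rewrite -(dr_c hvw) => /card_gt1P[p [p' []]].
by rewrite !inE => /andP[e_wp /eqP d_p] /andP[e_wp' /eqP d_p'] pp'; exists p, p'.
Qed.

(* Adjacent vertices q, q' have fewer than b_0 - b_1 common neighbours: the b_0
   neighbours of q' include q, the common neighbours of q and q', and the b_1
   vertices at distance 2 from q, pairwise distinct. *)
Lemma dr_common_adjacent q q' : 1 < D -> e q q' ->
  #|[set z | e q z & e q' z]| + b 1 < b 0.
Proof.
move=> D_gt1 hqq'.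
have d_qq' : gdist e q q' = 1 by apply/eqP; rewrite gdist1E.
set S1 := [set z | e q z & e q' z].
set S2 := [set z | e q' z & gdist e q z == 2].
have card_S2 : #|S2| = b 1 by have := dr_b (v:=q) (w:=q'); rewrite d_qq' => /(_ D_gt1).
have disj_S12 : S1 :&: S2 = set0.
  apply/setP => z; rewrite !inE -[e q z](gdist1E e_conn e_irr).
  by case: (gdist e q z) => [|[|[|?]]]; rewrite ?andbF.
have sub_S12 : S1 :|: S2 \subset [set z | e q' z] :\ q.
  apply/subsetP => z; rewrite !inE; case: (eqVneq z q) => [->|_].
    by rewrite e_irr gdist_refl // andbF.
  by case/orP=> /andP[]; [move=> _ -> | move=> ->].
have := subset_leq_card sub_S12; rewrite cardsU disj_S12 cards0 subn0 card_S2.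
have := cardsD1 q [set z | e q' z]; rewrite inE e_sym hqq' dr_valency; lia.
Qed.

(* Two distinct vertices with a common neighbour have c_2 common neighbours
   (at distance 2) or fewer than b_0 - b_1 of them (when adjacent). *)
Lemma dr_common_bound l q q' : 1 < D -> q != q' -> e l q -> e l q' ->
  #|[set z | e q z & e q' z]| = c 2 \/ #|[set z | e q z & e q' z]| + b 1 < b 0.
Proof.
move=> D_gt1 hqq' hlq hlq'.
case: (boolP (e q q')) => [/(dr_common_adjacent D_gt1)|hnqq']; first by right.
left; rewrite dr_common2 //.
by rewrite (gdist2_common e_conn e_irr e_sym hqq' hnqq' (z := l)) // e_sym.
Qed.

Lemma dr_valency_neq_common : 0 < D -> 0 < b 0 -> b 0 != c 2 ->
  forall a x y, x != y -> ~~ e x y -> #|[set z | e a z]| != #|[set z | e x z & e y z]|.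
Proof.
move=> D_gt0 b0_gt0 b0_neq_c2 a x y hxy hnxy; rewrite dr_valency //.
case: (set_0Vmem [set z | e x z & e y z]) => [->|[z]]; first by rewrite cards0 -lt0n.
rewrite inE => /andP[hxz hyz].
by rewrite dr_common2 // (gdist2_common _ _ _ hxy hnxy hxz hyz).
Qed.

(* The combinatorial heart of the lemma: under (a), (b) or (c), if q != q' are
   neighbours of l at distance m - 1 from j, where d(j,l) = m, then l is the only
   common neighbour of q and q' at distance m from j.  Indeed q, q' have at most
   one common neighbour in cases (a), (b), and at most two in case (c), where
   m = 2 and j is a third common neighbour. *)
Lemma far_common_neighbour_unique m : 1 < D ->
  [\/ c 2 = 1 /\ b 1 + 1 = b 0, c 2 = 1 /\ b 1 + 2 = b 0 |
      [/\ c 2 = 2, m = 2 & b 1 + 3 = b 0]] ->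
  forall j l, gdist e j l = m -> forall q q' a, q != q' -> e l q -> e l q' ->
  gdist e j q = m.-1 -> gdist e j q' = m.-1 -> e q a -> e q' a -> gdist e j a = m ->
  a = l.
Proof.
move=> D_gt1 cases j l d_jl q q' a hqq' hlq hlq' d_jq d_jq' hqa hq'a d_ja.
apply/eqP; apply: contraT => hal.
set S := [set z | e q z & e q' z].
have lS : l \in S by rewrite inE e_sym hlq e_sym hlq'.
have aS : a \in S by rewrite inE hqa hq'a.
have S_bound := dr_common_bound D_gt1 hqq' hlq hlq'; rewrite -/S in S_bound.
have S_gt1 : 1 < #|S| by apply/card_gt1P; exists a, l.
case: cases => [[c2 b01]|[c2 b01]|[c2 m2 b01]]; try lia.
have jS : j \in S.
  by rewrite inE (e_sym q) (e_sym q') -!(gdist1E e_conn e_irr) d_jq d_jq' m2.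
have : 2 < #|S|.
  apply/card_gt2P; exists a, l, j; split; split => //.
  - by apply/eqP => hlj; move: d_jl; rewrite hlj gdist_refl // m2.
  - by apply/eqP => hja; move: d_ja; rewrite -hja gdist_refl // m2.
lia.
Qed.

End DistanceRegular.

Local Open Scope ring_scope.

Lemma natmul_eq_eq0 (R : numFieldType) (V : lmodType R) (X : V) p q :
  X *+ p = X *+ q -> p != q -> X = 0.
Proof.
move=> Xpq; rewrite -(eqr_nat R) -subr_eq0 => pq_neq0.
have : (p%:R - q%:R : R) *: X == 0 by rewrite scalerBl !scaler_nat Xpq subrr.
by rewrite scaler_eq0 (negbTE pq_neq0) => /eqP.
Qed.

Section DistancePreservation.
Variables (n : nat) (e : rel 'I_n) (R : numFieldType) (A : lalgType R).
Variable v : 'I_n -> 'I_n -> A.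
Hypothesis v_row : forall i, \sum_l v i l = 1.
Hypothesis v_col : forall i, \sum_l v l i = 1.
Hypothesis v_adj : forall i j k l, e i k != e j l ->
  v i j * v k l = 0 /\ v k l * v i j = 0.

Let adj_l i j k l : e i k != e j l -> v i j * v k l = 0.
Proof. by case/v_adj. Qed.

Let adj_r i j k l : e i k != e j l -> v k l * v i j = 0.
Proof. by case/v_adj. Qed.

Lemma insert_row x (X Y : A) : X * Y = \sum_y X * v x y * Y.
Proof. by rewrite -mulr_suml -mulr_sumr v_row mulr1. Qed.

Hypotheses (e_irr : irreflexive e) (e_conn : connected_graph e).
Hypothesis valency_neq_common : forall a b c, b != c -> ~~ e b c ->
  #|[set x | e a x]| != #|[set y | e b y & e c y]|.

(* Rows are orthogonal.  For b, c non-adjacent, inserting a row at every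
   neighbour x of a shows that  #N(a) * v a b * v a c  equals
   #(N(b) :&: N(c)) * v a b * v a c, and the two counts differ. *)
Lemma row_orth a b c : b != c -> v a b * v a c = 0.
Proof.
move=> hbc; case: (boolP (e b c)) => hec.
  by apply: adj_l; rewrite e_irr hec.
set X := v a b * v a c; set Na := [set x | e a x]; set Nbc := [set y | e b y & e c y].
have through_common x : x \in Na -> X = \sum_(y in Nbc) v a b * v x y * v a c.
  rewrite inE => hax; rewrite /X (insert_row x) [RHS]big_rmcond //= => y.
  rewrite inE negb_and => /orP[hby|hcy].
    by rewrite adj_l ?mul0r // hax (negbTE hby).
  by rewrite -mulrA adj_r ?mulr0 // hax (negbTE hcy).
have col_common y : y \in Nbc -> \sum_(x in Na) v a b * v x y = v a b.
  rewrite inE => /andP[hby _]; rewrite big_rmcond => [|x].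
    by rewrite -mulr_sumr v_col mulr1.
  by rewrite inE => hax; rewrite adj_l // (negbTE hax) hby.
apply: (natmul_eq_eq0 _ (valency_neq_common a hbc hec)); rewrite -!sumr_const.
rewrite (eq_bigr _ through_common) exchange_big; apply: eq_bigr => y /col_common.
by rewrite -mulr_suml => ->.
Qed.

(* v a b * v c d vanishes as soon as d(a,c) < d(b,d), by induction on d(a,c):
   insert the row of a neighbour x of c with d(a,x) = d(a,c) - 1. *)
Lemma dist_preserving_lt s a b c d :
  gdist e a c = s -> (s < gdist e b d)%N -> v a b * v c d = 0.
Proof.
elim: s a b c d => [|s IH] a b c d d_ac lt_bd.
  rewrite (gdist_eq0 e_conn d_ac) row_orth //.
  by apply: contraTneq lt_bd => ->; rewrite gdist_refl.
have [x e_xc d_ax] := gdist_pred e_conn d_ac.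
rewrite (insert_row x) big1 // => y _.
case: (boolP (e y d)) => e_yd.
  rewrite (IH a b x y d_ax) ?mul0r // -ltnS.
  exact: leq_trans lt_bd (gdist_edge e_conn b e_yd).
by rewrite -mulrA adj_l ?mulr0 // e_xc (negbTE e_yd).
Qed.

End DistancePreservation.

(* Distance preservation: u a b * u c d = 0 whenever d(a,c) != d(b,d).  The case
   d(a,c) > d(b,d) is the previous lemma for the transposed family. *)
Lemma dist_preserving n (e : rel 'I_n) (R : numFieldType) (A : lalgType R)
    (v : 'I_n -> 'I_n -> A) :
  (forall i, \sum_l v i l = 1) -> (forall i, \sum_l v l i = 1) ->
  (forall i j k l, e i k != e j l -> v i j * v k l = 0 /\ v k l * v i j = 0) ->
  irreflexive e -> connected_graph e ->
  (forall a b c, b != c -> ~~ e b c ->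
     #|[set x | e a x]| != #|[set y | e b y & e c y]|) ->
  forall a b c d, gdist e a c != gdist e b d -> v a b * v c d = 0.
Proof.
move=> v_row v_col v_adj e_irr e_conn valency_neq a b c d.
rewrite neq_ltn => /orP[lt|lt].
  exact: (dist_preserving_lt v_row v_col v_adj e_irr e_conn valency_neq erefl lt).
have vT_adj i j k l : e i k != e j l -> v j i * v l k = 0 /\ v l k * v j i = 0.
  by rewrite eq_sym; apply: v_adj.
exact: (dist_preserving_lt (v := fun x y => v y x) v_col v_row vT_adj e_irr e_conn
  valency_neq erefl lt).
Qed.

Section CStarFacts.
Variables (C : numClosedFieldType) (A : algType C) (star : A -> A) (nrm : A -> C).
Hypothesis cs : cstar_algebra star nrm.

Lemma star0 : star 0 = 0.
Proof. by apply: (addrI (star 0)); rewrite -(star_add cs) !addr0. Qed.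

Lemma starM x y : star (x * y) = star y * star x.
Proof. exact: (star_mul cs). Qed.

Lemma star_sum (I : finType) (P : pred I) (F : I -> A) :
  star (\sum_(x | P x) F x) = \sum_(x | P x) star (F x).
Proof. exact: (big_morph star (star_add cs) star0). Qed.

(* By the C*-identity, x * x^* = 0 forces x = 0. *)
Lemma cstar_eq0 x : x * star x = 0 -> x = 0.
Proof.
move=> xx0; have nrm0 : nrm 0 = 0.
  by have := nrm_scale cs 0 0; rewrite scale0r normr0 mul0r.
have /eqP : nrm (star x) ^+ 2 = 0 by rewrite -(nrm_cstar cs) (star_invol cs) xx0.
rewrite expf_eq0 /= => /eqP /(nrm_eq0 cs) x0.
by rewrite -(star_invol cs x) x0 star0.
Qed.

End CStarFacts.

Section Commutation.
Variables (n : nat) (e : rel 'I_n).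
Hypotheses (e_sym : symmetric e) (e_conn : connected_graph e).
Variables (C : numClosedFieldType) (A : algType C) (star : A -> A) (nrm : A -> C).
Hypothesis cs : cstar_algebra star nrm.
Variable u : 'I_n -> 'I_n -> A.
Hypothesis u_sa : forall i j, star (u i j) = u i j.
Hypothesis u_idem : forall i j, u i j * u i j = u i j.
Hypothesis u_row : forall i, \sum_l u i l = 1.
Hypothesis u_adj : forall i j k l, e i k != e j l ->
  u i j * u k l = 0 /\ u k l * u i j = 0.
Hypothesis u_dp : forall a b c d, gdist e a c != gdist e b d -> u a b * u c d = 0.

Let adj_l i j k l : e i k != e j l -> u i j * u k l = 0.
Proof. by case/u_adj. Qed.

Let adj_r i j k l : e i k != e j l -> u k l * u i j = 0.
Proof. by case/u_adj. Qed.

Lemma u_row_mul a b c : u a b * u a c = if c == b then u a b else 0.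
Proof.
case: eqP => [->|/eqP hcb]; first exact: u_idem.
apply: u_dp; by rewrite gdist_refl // eq_sym; apply: contra_neq hcb => /(gdist_eq0 e_conn).
Qed.

Lemma u_col_orth a b c : b != c -> u b a * u c a = 0.
Proof.
move=> hbc; apply: u_dp.
by rewrite gdist_refl //; apply: contra_neq hbc => /(gdist_eq0 e_conn).
Qed.

Variables (m : nat) (i j k l : 'I_n).
Hypothesis d_ik : gdist e i k = m.
Hypothesis u_comm : forall i j k l, gdist e i k = m.-1 -> gdist e j l = m.-1 ->
  u i j * u k l = u k l * u i j.
Hypothesis l_unique : forall q q' a, q != q' -> e l q -> e l q' ->
  gdist e j q = m.-1 -> gdist e j q' = m.-1 -> e q a -> e q' a -> gdist e j a = m -> a = l.

(* L x = \sum_(q ~ l) u x q, a self-adjoint element ("x is sent next to l"). *)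
Definition nbr_sum x := \sum_(q in [set q | e l q]) u x q.

Lemma nbr_sum_sa x : star (nbr_sum x) = nbr_sum x.
Proof. by rewrite (star_sum cs); apply: eq_bigr => q _; rewrite u_sa. Qed.

Lemma nbr_sum_absorb x : e k x -> nbr_sum x * u k l = u k l /\ u k l * nbr_sum x = u k l.
Proof.
move=> e_kx; rewrite /nbr_sum mulr_suml mulr_sumr; split.
  rewrite big_rmcond => [|q]; first by rewrite -mulr_suml u_row mul1r.
  by rewrite inE => nlq; rewrite adj_r // e_kx (negbTE nlq).
rewrite big_rmcond => [|q]; first by rewrite -mulr_sumr u_row mulr1.
by rewrite inE => nlq; rewrite adj_l // e_kx (negbTE nlq).
Qed.

(* u i j commutes with u x q whenever d(i,x) = m - 1: by hypothesis if
   d(j,q) = m - 1, and otherwise both products vanish by distance preservation. *)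
Lemma u_comm_far x q : gdist e i x = m.-1 -> u i j * u x q = u x q * u i j.
Proof.
move=> d_ix; case: (eqVneq (gdist e j q) m.-1) => d_jq; first exact: u_comm.
have prod0 : u i j * u x q = 0 by apply: u_dp; rewrite d_ix eq_sym.
by rewrite prod0 -(u_sa x q) -(u_sa i j) -(starM cs) prod0 (star0 cs).
Qed.

Lemma nbr_sum_comm x : gdist e i x = m.-1 -> u i j * nbr_sum x = nbr_sum x * u i j.
Proof.
by move=> d_ix; rewrite mulr_sumr mulr_suml; apply: eq_bigr => q _; apply: u_comm_far.
Qed.

Definition sibling q q' := (q' != q) && (gdist e j q' == m.-1).

Section Pair.
Variables (p p' : 'I_n).
Hypotheses (e_kp : e k p) (e_kp' : e k p') (p_neq : p != p').
Hypotheses (d_ip : gdist e i p = m.-1) (d_ip' : gdist e i p' = m.-1).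

Definition nonsibling_sum q := \sum_(q' in [set q | e l q] | ~~ sibling q q') u p' q'.

(* The q-th term of the difference u i j * u k l - u i j * L p * L p'. *)
Definition defect q := u i j * u p q * u k l * nonsibling_sum q.

(* For q' not a sibling of q, u i j * u p q * u p' q' vanishes: by column
   orthogonality if q' = q, by distance preservation otherwise. *)
Lemma prod_nonsibling q q' : ~~ sibling q q' -> u i j * u p q * u p' q' = 0.
Proof.
rewrite negb_and negbK => /orP[/eqP ->|d_jq']; first by rewrite -mulrA u_col_orth ?mulr0.
case: (eqVneq (gdist e j q) m.-1) => d_jq.
  by rewrite u_comm_far // -mulrA (@u_dp i j p' q') ?mulr0 // d_ip' eq_sym.
by rewrite (@u_dp i j p q) ?mul0r // d_ip eq_sym.
Qed.

(* For a sibling q' of q, inserting the row of k in u i j * u p q * u p' q'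
   leaves only the term at l: any surviving a is a common neighbour of q, q'
   at distance m from j, hence a = l. *)
Lemma prod_sibling q q' : sibling q q' -> e l q -> e l q' ->
  u i j * u p q * u p' q' = u i j * u p q * u k l * u p' q'.
Proof.
case/andP=> hq'q /eqP d_jq' e_lq e_lq'.
case: (eqVneq (gdist e j q) m.-1) => d_jq; last first.
  by rewrite (@u_dp i j p q) ?mul0r // d_ip eq_sym.
rewrite [LHS](insert_row u_row k) (bigD1 l) //= big1 ?addr0 // => a hal.
case: (boolP (e q a)) => e_qa; last first.
  by rewrite -(mulrA (u i j)) (@adj_l p q k a) ?mulr0 ?mul0r // e_sym e_kp (negbTE e_qa).
case: (boolP (e q' a)) => e_q'a; last first.
  by rewrite -mulrA (@adj_l k a p' q') ?mulr0 // e_kp' e_sym (negbTE e_q'a).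
case: (eqVneq (gdist e j a) m) => d_ja; last first.
  by rewrite u_comm_far // -(mulrA (u p q)) (@u_dp i j k a) ?mulr0 ?mul0r // d_ik eq_sym.
have q_neq : q != q' by rewrite eq_sym.
by move: hal; rewrite (l_unique q_neq e_lq e_lq' d_jq d_jq' e_qa e_q'a d_ja) eqxx.
Qed.

(* Splitting L p' into siblings and non-siblings of q: the siblings factor
   through u k l, the non-siblings vanish. *)
Lemma defect_term q : e l q -> u i j * u p q * (u k l - nbr_sum p') = defect q.
Proof.
move=> e_lq; set G := \sum_(q' in [set q | e l q] | sibling q q') u p' q'.
have split_L : nbr_sum p' = G + nonsibling_sum q by rewrite /nbr_sum (bigID (sibling q)).
have prod_ns : u i j * u p q * nonsibling_sum q = 0.
  by rewrite mulr_sumr big1 // => q' /andP[_ /prod_nonsibling].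
have prod_G : u i j * u p q * G = u i j * u p q * u k l * G.
  rewrite !mulr_sumr; apply: eq_bigr => q' /andP[]; rewrite inE => e_lq' sib.
  exact: prod_sibling.
rewrite -{1}(nbr_sum_absorb e_kp').2 split_L mulrBr [X in _ - X]mulrDr prod_ns addr0.
by rewrite prod_G mulrA mulrDr addrAC subrr add0r.
Qed.

(* Expanding L p in u i j * L p * (u k l - L p') splits the difference into defects. *)
Lemma defect_sum :
  u i j * u k l - u i j * (nbr_sum p * nbr_sum p') = \sum_(q in [set q | e l q]) defect q.
Proof.
rewrite -{1}(nbr_sum_absorb e_kp).1 mulrA mulrA -mulrBr mulr_sumr mulr_suml.
by apply: eq_bigr => q; rewrite inE; apply: defect_term.
Qed.

Lemma defect_sum_absorb :
  (u i j * u k l - u i j * (nbr_sum p * nbr_sum p')) * u k l = 0.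
Proof.
by rewrite mulrBl -!mulrA u_idem (nbr_sum_absorb e_kp').1 (nbr_sum_absorb e_kp).1 subrr.
Qed.

Lemma prod_orth r q :
  u i j * u p r * (u i j * u p q) = if q == r then u i j * u p r else 0.
Proof.
case: (eqVneq (gdist e j r) m.-1) => d_jr; last first.
  by rewrite (@u_dp i j p r) ?mul0r ?if_same // d_ip eq_sym.
rewrite -mulrA (mulrA (u p r)) -u_comm_far // -!mulrA (mulrA (u i j)) u_idem u_row_mul.
by case: eqP; rewrite ?mulr0.
Qed.

(* Multiplying the previous identity on the left by u i j * u p r isolates the
   r-th defect: each defect is annihilated on the right by u k l. *)
Lemma defect_absorb r : e l r -> defect r * u k l = 0.
Proof.
move=> e_lr; have := congr1 (fun X => u i j * u p r * X) defect_sum_absorb.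
rewrite /= mulr0 defect_sum mulr_suml mulr_sumr (bigD1 r) ?inE //= big1 ?addr0.
  by rewrite /defect !mulrA -(mulrA _ (u i j)) prod_orth eqxx -!mulrA.
move=> q /andP[_ hqr]; rewrite /defect !mulrA -(mulrA _ (u i j)) prod_orth.
by rewrite (negbTE hqr) !mul0r.
Qed.

Lemma nonsibling_sum_sa q : star (nonsibling_sum q) = nonsibling_sum q.
Proof. by rewrite (star_sum cs); apply: eq_bigr => q' _; rewrite u_sa. Qed.

Lemma nonsibling_sum_idem q : nonsibling_sum q * nonsibling_sum q = nonsibling_sum q.
Proof.
rewrite {1}/nonsibling_sum mulr_suml; apply: eq_bigr => q' hq'.
rewrite mulr_sumr (bigD1 q') //= big1 ?addr0 ?u_idem // => q'' /andP[_ hne].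
by rewrite u_row_mul (negbTE hne).
Qed.

(* Each defect vanishes: writing T = defect r and using that the non-sibling
   sum is a self-adjoint idempotent,  T * T^* = T * u k l * (u i j * u p r)^* = 0. *)
Lemma defect0 r : e l r -> defect r = 0.
Proof.
move=> e_lr; apply: (cstar_eq0 cs).
have idem_right Z : defect r * (nonsibling_sum r * Z) = defect r * Z.
  by rewrite /defect -!mulrA (mulrA (nonsibling_sum r)) nonsibling_sum_idem.
have -> : star (defect r) = nonsibling_sum r * (u k l * star (u i j * u p r)).
  by rewrite /defect (starM cs) nonsibling_sum_sa (starM cs) u_sa.
by rewrite idem_right mulrA defect_absorb // mul0r.
Qed.

Lemma factor_through_nbr_sums : u i j * u k l = u i j * (nbr_sum p * nbr_sum p').
Proof.
apply/eqP; rewrite -subr_eq0 defect_sum big1 // => q; rewrite inE; exact: defect0.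
Qed.

End Pair.

(* Two distinct neighbours p, p' of k at distance m - 1 from i yield
   u i j * u k l = u i j * L p * L p' = u i j * L p' * L p; taking adjoints of
   the latter and commuting u i j with L p, L p' gives u k l * u i j. *)
Lemma commute_via_pair p p' : e k p -> e k p' -> p != p' ->
  gdist e i p = m.-1 -> gdist e i p' = m.-1 -> u i j * u k l = u k l * u i j.
Proof.
move=> e_kp e_kp' p_neq d_ip d_ip'; have p'_neq : p' != p by rewrite eq_sym.
have -> : u k l * u i j = star (u i j * u k l) by rewrite (starM cs) !u_sa.
rewrite {2}(factor_through_nbr_sums e_kp' e_kp p'_neq d_ip' d_ip).
rewrite (factor_through_nbr_sums e_kp e_kp' p_neq d_ip d_ip').
rewrite mulrA (nbr_sum_comm d_ip) -mulrA (nbr_sum_comm d_ip') mulrA.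
by rewrite !(starM cs) !nbr_sum_sa u_sa.
Qed.

End Commutation.

Local Close Scope ring_scope.
Unset Implicit Arguments.

Theorem lemma3p8 (n : nat) (e : rel 'I_n) (D : nat) (b c : nat -> nat)
  (C : numClosedFieldType) (A : algType C) (star : A -> A) (nrm : A -> C)
  (u : 'I_n -> 'I_n -> A) (m : nat) :
  distance_regular e D b c ->
  cstar_algebra star nrm ->
  qaut_relations e star u ->
  (2 <= m <= D)%N -> (2 <= c m)%N ->
  (forall i j k l : 'I_n, gdist e i k = m.-1 -> gdist e j l = m.-1 ->
     (u i j * u k l = u k l * u i j)%R) ->
  [\/ c 2 = 1%N /\ (b 1 + 1 = b 0)%N,
      c 2 = 1%N /\ (b 1 + 2 = b 0)%N |
      [/\ c 2 = 2%N, m = 2%N & (b 1 + 3 = b 0)%N]] ->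
  forall i j k l : 'I_n, gdist e i k = m -> gdist e j l = m ->
    (u i j * u k l = u k l * u i j)%R.
Proof.
move=> e_dr cs [u_R1 u_R2 u_R3] /andP[m_ge2 m_le_D] c_m_ge2 u_comm cases i j k l d_ik d_jl.
have [[e_sym e_irr] e_conn _ _] := e_dr.
have D_gt1 : (1 < D)%N := leq_trans m_ge2 m_le_D.
have m_gt0 : (0 < gdist e i k)%N by rewrite d_ik ltnW.
have c_m_le_b0 := dr_c_le_valency e_dr m_gt0; rewrite d_ik in c_m_le_b0.
(* b_0 >= c_m >= 2, so b_0 differs from c_2 in each case: u preserves distances. *)
have b0_gt0 : (0 < b 0)%N by lia.
have b0_neq_c2 : b 0 != c 2 by apply/eqP; case: cases => [[? ?]|[? ?]|[? ? ?]]; lia.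
have u_dp := dist_preserving (fun i => (u_R2 i).1) (fun i => (u_R2 i).2) u_R3 e_irr e_conn
  (dr_valency_neq_common e_dr (ltnW D_gt1) b0_gt0 b0_neq_c2).
have c_ik_gt1 : (1 < c (gdist e i k))%N by rewrite d_ik.
have [p [p' [e_kp e_kp' p_neq]]] := dr_two_closer e_dr m_gt0 c_ik_gt1.
rewrite d_ik => d_ip d_ip'.
apply: (commute_via_pair e_sym e_conn cs (fun i j => esym (u_R1 i j).1)
  (fun i j => esym (u_R1 i j).2) (fun i => (u_R2 i).1) u_R3 u_dp d_ik u_comm
  (far_common_neighbour_unique e_dr D_gt1 cases d_jl) e_kp e_kp' p_neq d_ip d_ip').
Qed.
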